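(* Let $n\geq 2$, $k>0$, $m=\lfloor n/2\rfloor$, and $a\in\mathbb{C}^{2^m}$. Let $\phi'_{a,0}$ be the Killing spinor on $(\mathbb{H}^n_{-k^2},g')$ corresponding to $a$ (described in the context). Then at every point $X\in\mathbb{H}^n_{-k^2}\subset\mathbb{R}^{n,1}$, $$|\phi'_{a,0}|^2_{g'}=-2k\,X\cdot\zeta_a,$$ where $$\zeta_a=\sum_{j=1}^n\langle\sqrt{-1}\,c(e_j)a,a\rangle e_j-\langle\sqrt{-1}\,c(e_0)a,a\rangle e_0=\sum_{j=1}^n\langle\sqrt{-1}\,c(e_j)a,a\rangle e_j+|a|^2e_0 .$$
   Context: $\mathbb{R}^{n,1}$ is Minkowski space with orthonormal basis $e_1=\partial/\partial x_1,\dots,e_n=\partial/\partial x_n$, $e_0=\partial/\partial t$, metric $\sum dx_i^2-dt^2$ and Lorentz inner product ''$\cdot$''. $\mathbb{H}^n_{-k^2}=\{X=(x_1,\dots,x_n,t):\sum x_i^2-t^2=-1/k^2,\ t>0\}$ with induced metric $g'$. $\langle\cdot,\cdot\rangle$ is the standard Hermitian inner product on $\mathbb{C}^{2^m}$, $c(e_j)$ ($1\le j\le n$) are Baum's Clifford matrices (complex $2^m\times2^m$ matrices with $c(e_i)c(e_j)+c(e_j)c(e_i)=-2\delta_{ij}I$, built from $g_1=\begin{pmatrix}\sqrt{-1}&0\\0&-\sqrt{-1}\end{pmatrix}$, $g_2=\begin{pmatrix}0&\sqrt{-1}\\\sqrt{-1}&0\end{pmatrix}$, $T=\begin{pmatrix}0&-\sqrt{-1}\\\sqrt{-1}&0\end{pmatrix}$,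 $E=I_2$ by $c(e_{2j-1})=E\otimes\cdots\otimes E\otimes g_1\otimes T\otimes\cdots\otimes T$, $c(e_{2j})=E\otimes\cdots\otimes E\otimes g_2\otimes T\otimes\cdots\otimes T$ ($j-1$ factors $E$, $m$ factors total), and, if $n=2m+1$, $c(e_n)=\sqrt{-1}\,T\otimes\cdots\otimes T$), and $c(e_0):=\sqrt{-1}I$. A Killing spinor is a spinor field $\phi'$ with $\nabla'_V\phi'+\frac{\sqrt{-1}}{2}k\,c'(V)\phi'=0$ for all $V$, $\nabla'$ the spin connection and $c'$ Clifford multiplication of $g'$. By Baum, the Killing spinors are parametrized by $a\in\mathbb{C}^{2^m}$: in the ball model $x\in\{|x|<1/k\}\subset\mathbb{R}^n$ with metric $4|dx|^2/(1-k^2|x|^2)^2$, identified with the hyperboloid via $X=\big(\tfrac{2x}{1-k^2|x|^2},\tfrac{1+k^2|x|^2}{k(1-k^2|x|^2)}\big)$, and with the spinor bundle trivialized, $\phi'_{a,0}(x)=\sqrt{\tfrac{2}{1-k^2|x|^2}}\big(a-\sqrt{-1}\,k\,c(x)a\big)$, where $c(x)=\sum_j x_jc(e_j)$ (for $k=1$ this is Baum's formula $\sqrt{2/(1-|x|^2)}(a-\sqrt{-1}c(x)a)$). *)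

From HB Require Import structures.
From mathcomp Require Import all_boot all_order all_algebra.
From mathcomp Require Export complex.
Set Implicit Arguments. Unset Strict Implicit. Unset Printing Implicit Defensive.
Import Order.TTheory GRing.Theory Num.Theory.
Local Open Scope ring_scope.
Local Open Scope complex_scope.

Section Baum.
Variable R : rcfType.
Local Notation C := R[i].

(* 2x2 building blocks of Baum's Clifford matrices *)
Definition g1 : 'M[C]_2 := \matrix_(r, s)
  (if (r == 0) && (s == 0) then 'i else if (r == 1) && (s == 1) then - 'i else 0).
Definition g2 : 'M[C]_2 := \matrix_(r, s) (if r != s then 'i else 0).
Definition Tm : 'M[C]_2 := \matrix_(r, s)
  (if (r == 0) && (s == 1) then - 'i else if (r == 1) && (s == 0) then 'i else 0).
Definition Em : 'M[C]_2 := 1%:M.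

(* l-th binary digit (l = 0 is the most significant one) of an index i < 2^m;
   this is the index of the l-th tensor factor. *)
Definition kbit (m i l : nat) : 'I_2 := inord (odd (i %/ 2 ^ (m - l.+1))).

(* Kronecker product F 0 (x) F 1 (x) ... (x) F (m-1) of m 2x2 matrices, written
   out entrywise. *)
Definition kron (m : nat) (F : nat -> 'M[C]_2) : 'M[C]_(2 ^ m) :=
  \matrix_(i, j) \prod_(l < m) F l (kbit m i l) (kbit m j l).

(* Baum's Clifford matrix c(e_{p+1}) for p : 'I_n, of size 2^m, m = n/2. *)
Definition cliff (n : nat) (p : 'I_n) : 'M[C]_(2 ^ n./2) :=
  let m := n./2 in
  if (p : nat) == m.*2 then (* only possible when n = 2m+1 odd and p+1 = n *)
    'i *: kron m (fun _ => Tm)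
  else
    kron m (fun l => if (l < p./2)%N then Em
                     else if l == p./2 then (if odd p then g2 else g1)
                     else Tm).

Definition cliff0 (n : nat) : 'M[C]_(2 ^ n./2) := 'i%:M.

Definition cliffx (n : nat) (x : 'rV[R]_n) : 'M[C]_(2 ^ n./2) :=
  \sum_(p < n) (x 0 p)%:C *: cliff p.

Definition herm (N : nat) (u v : 'cV[C]_N) : C := \sum_(r < N) u r 0 * (v r 0)^*.

Definition sqnorm (n : nat) (x : 'rV[R]_n) : R := \sum_(p < n) x 0 p ^+ 2.

(* Minkowski vectors of R^{n,1} with complex coefficients:
   (spatial components along e_1..e_n, component along e_0) *)
Definition mink (n : nat) := ('rV[C]_n * C)%type.

Definition lorentz (n : nat) (X Y : mink n) : C :=
  \sum_(p < n) X.1 0 p * Y.1 0 p - X.2 * Y.2.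

(* identification of the ball model {|x| < 1/k} with the hyperboloid *)
Definition hyp_of_ball (n : nat) (k : R) (x : 'rV[R]_n) : mink n :=
  let d := 1 - k ^+ 2 * sqnorm x in
  (\row_p (2 * x 0 p / d)%:C, ((1 + k ^+ 2 * sqnorm x) / (k * d))%:C).

Definition zeta (n : nat) (a : 'cV[C]_(2 ^ n./2)) : mink n :=
  (\row_p herm ('i *: (cliff p *m a)) a, - herm ('i *: (cliff0 n *m a)) a).

(* Killing spinor phi'_{a,0} in the ball model, trivialized *)
Definition killing (n : nat) (k : R) (a : 'cV[C]_(2 ^ n./2)) (x : 'rV[R]_n)
  : 'cV[C]_(2 ^ n./2) :=
  (Num.sqrt (2 / (1 - k ^+ 2 * sqnorm x)))%:C *:
    (a - ('i * k%:C) *: (cliffx x *m a)).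

End Baum.

From HB Require Import structures.
From mathcomp Require Import all_boot all_order all_algebra.
From mathcomp Require Import complex zify ring.
Import Order.TTheory GRing.Theory Num.Theory.
Set Implicit Arguments. Unset Strict Implicit. Unset Printing Implicit Defensive.
Local Open Scope ring_scope.
Local Open Scope sesquilinear_scope.
Local Open Scope complex_scope.

(* Write d = 1 - k^2|x|^2 and z = sqrt(-1) k, so that
   phi'_{a,0} = sqrt(2/d) (a - z c(x) a).  Baum's matrices are skew-adjoint and
   satisfy the Clifford relations (checked factorwise on the Kronecker products,
   where they reduce to relations between g1, g2 and T), hence c(x) is
   skew-adjoint with c(x)^2 = -|x|^2.  As z is purely imaginary,
   |a - z c(x) a|^2 = (1 + k^2|x|^2)|a|^2 - 2 sqrt(-1) k <c(x) a, a>, and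
   expanding -2k X.zeta_a with X = (2x, (1 + k^2|x|^2)/k)/d gives 2/d times
   the same expression. *)

Lemma eq_binary_digits m r1 r2 : (r1 < 2 ^ m)%N -> (r2 < 2 ^ m)%N ->
  (forall j, (j < m)%N -> odd (r1 %/ 2 ^ j) = odd (r2 %/ 2 ^ j)) -> r1 = r2.
Proof.
elim: m r1 r2 => [|m IH] r1 r2.
  by rewrite expn0 !ltnS !leqn0 => /eqP-> /eqP->.
move=> r1_lt r2_lt eq_digits.
rewrite -(odd_double_half r1) -(odd_double_half r2).
have := eq_digits 0%N isT; rewrite expn0 !divn1 => ->.
congr (_ + _.*2)%N; apply: IH; try by rewrite -divn2 ltn_divLR // -expnSr.
by move=> j lt_jm; rewrite -!divn2 -!divnMA -expnS; apply: eq_digits.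
Qed.

Section Kronecker.
Variable R : rcfType.
Local Notation C := R[i].

Definition digits m (r : 'I_(2 ^ m)) : {ffun 'I_m -> 'I_2} :=
  [ffun l : 'I_m => kbit m r l].

Lemma digits_inj m : injective (@digits m).
Proof.
move=> r1 r2 /ffunP eq_r; apply/val_inj/(@eq_binary_digits m) => [||j lt_jm];
  rewrite ?ltn_ord //.
have lt_l : (m - j.+1 < m)%N by lia.
have /(congr1 val) := eq_r (Ordinal lt_l).
rewrite !ffunE /kbit /= !inordK ?ltnS ?leq_b1 //.
have -> : (m - (m - j.+1).+1 = j)%N by lia.
by do 2 case: odd.
Qed.

Lemma digits_bij m : bijective (@digits m).
Proof. by apply: inj_card_bij; [exact: digits_inj | rewrite card_ffun !card_ord]. Qed.

Lemma eq_kron m (F G : nat -> 'M[C]_2) :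
  (forall l, (l < m)%N -> F l = G l) -> kron m F = kron m G.
Proof.
by move=> eqFG; apply/matrixP => i j; rewrite !mxE; apply: eq_bigr => l _; rewrite eqFG.
Qed.

(* The middle index of the product is reindexed by its vector of binary digits. *)
Lemma mulmx_kron m (F G : nat -> 'M[C]_2) :
  kron m F *m kron m G = kron m (fun l => F l *m G l).
Proof.
apply/matrixP => i j; rewrite !mxE.
under [RHS]eq_bigr do rewrite mxE.
rewrite bigA_distr_bigA (reindex (@digits m)) /=; last exact/onW_bij/digits_bij.
apply: eq_bigr => r _; rewrite !mxE -big_split; apply: eq_bigr => l _.
by rewrite ffunE.
Qed.

Lemma kron1 m : kron m (fun _ => (1%:M : 'M[C]_2)) = 1%:M.
Proof.
apply/matrixP => i j; rewrite !mxE; have [<-|neq_ij] := eqVneq i j.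
  by apply: big1 => l _; rewrite mxE eqxx.
have /existsP [l neq_l] : [exists l : 'I_m, kbit m i l != kbit m j l].
  apply: contraNT neq_ij => /existsPn eq_l; apply/eqP/digits_inj/ffunP => l.
  by rewrite !ffunE; apply/eqP; rewrite -[_ == _]negbK eq_l.
by rewrite (bigD1 l) //= mxE (negbTE neq_l) mul0r.
Qed.

Lemma kron_oppr_at m L (F G : nat -> 'M[C]_2) : (L < m)%N ->
  (forall l, (l < m)%N -> F l = if l == L then - G l else G l) ->
  kron m F = - kron m G.
Proof.
move=> lt_Lm eqFG; apply/matrixP => i j; rewrite !mxE.
rewrite (bigD1 (Ordinal lt_Lm)) // [in RHS](bigD1 (Ordinal lt_Lm)) //=.
rewrite eqFG // eqxx mxE mulNr; congr (- (_ * _)); apply: eq_bigr => l neq_l.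
rewrite eqFG // ifF //; apply: contraNF neq_l => /eqP eq_l; exact/eqP/val_inj.
Qed.

Lemma trmxC_kron m (F : nat -> 'M[C]_2) :
  (kron m F)^t* = kron m (fun l => (F l)^t*).
Proof.
apply/matrixP => i j; rewrite !mxE rmorph_prod; apply: eq_bigr => l _.
by rewrite !mxE.
Qed.

End Kronecker.

Section PauliBlocks.
Variable R : rcfType.

Lemma num_conjE : Num.conj =1 @conjc R. Proof. by []. Qed.

Ltac mx2 := apply/matrixP=> - [[|[|//]] ?] [[|[|//]] ?];
  rewrite !mxE ?big_ord_recr ?big_ord0 /= ?mxE /= ?num_conjE; simpc.

Lemma g1_sqr : g1 R *m g1 R = - 1%:M. Proof. by mx2. Qed.
Lemma g2_sqr : g2 R *m g2 R = - 1%:M. Proof. by mx2. Qed.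
Lemma Tm_sqr : Tm R *m Tm R = 1%:M. Proof. by mx2. Qed.
Lemma g1_anticomm_g2 : g1 R *m g2 R = - (g2 R *m g1 R). Proof. by mx2. Qed.
Lemma g1_anticomm_Tm : g1 R *m Tm R = - (Tm R *m g1 R). Proof. by mx2. Qed.
Lemma g2_anticomm_Tm : g2 R *m Tm R = - (Tm R *m g2 R). Proof. by mx2. Qed.
Lemma trmxC_g1 : (g1 R)^t* = - g1 R. Proof. by mx2. Qed.
Lemma trmxC_g2 : (g2 R)^t* = - g2 R. Proof. by mx2. Qed.
Lemma trmxC_Tm : (Tm R)^t* = Tm R. Proof. by mx2. Qed.
Lemma trmxC_Em : (Em R)^t* = Em R. Proof. by mx2. Qed.

End PauliBlocks.

Section CliffordMatrices.
Variable R : rcfType.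
Local Notation C := R[i].

Lemma trmxC_scale m n (c : C) (A : 'M[C]_(m, n)) :
  (c *: A)^t* = conjc c *: A^t*.
Proof. by apply/matrixP => i j; rewrite !mxE rmorphM. Qed.

Definition cliff_factor (p l : nat) : 'M[C]_2 :=
  if (l < p./2)%N then Em R
  else if l == p./2 then (if odd p then g2 R else g1 R) else Tm R.

Lemma cliffE n (p : 'I_n) : (p : nat) != (n./2).*2 ->
  cliff R p = kron n./2 (cliff_factor p).
Proof. by rewrite /cliff => /negbTE ->. Qed.

Lemma cliff_last n (p : 'I_n) : (p : nat) = (n./2).*2 ->
  cliff R p = 'i *: kron n./2 (fun _ => Tm R).
Proof. by rewrite /cliff => ->; rewrite eqxx. Qed.

Lemma half_lt_half_dim n (p : 'I_n) : (p : nat) != (n./2).*2 -> (p./2 < n./2)%N.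
Proof.
move=> /eqP p_neq; have := ltn_ord p.
have := odd_double_half p; have := odd_double_half n.
by do 2 case: odd => /=; lia.
Qed.

Lemma odd_of_half_eq p q : (p < q)%N -> p./2 = q./2 -> ~~ odd p /\ odd q.
Proof.
have := odd_double_half p; have := odd_double_half q.
by do 2 case: odd => /=; lia.
Qed.

Lemma trmxC_cliff_factor p l :
  (cliff_factor p l)^t* =
    if l == p./2 then - cliff_factor p l else cliff_factor p l.
Proof.
rewrite /cliff_factor; case: ltngtP => _; rewrite ?trmxC_Em ?trmxC_Tm //.
by case: odd; rewrite ?trmxC_g1 ?trmxC_g2.
Qed.

Lemma cliff_factor_sqr p l :
  cliff_factor p l *m cliff_factor p l = if l == p./2 then - 1%:M else 1%:M.
Proof.
rewrite /cliff_factor; case: ltngtP => _; rewrite /Em ?Tm_sqr ?mul1mx //.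
by case: odd; rewrite ?g1_sqr ?g2_sqr.
Qed.

Lemma cliff_factor_anticomm_Tm p l : cliff_factor p l *m Tm R =
  if l == p./2 then - (Tm R *m cliff_factor p l) else Tm R *m cliff_factor p l.
Proof.
rewrite /cliff_factor; case: ltngtP => _; rewrite /Em ?mul1mx ?mulmx1 //.
by case: odd; rewrite ?g1_anticomm_Tm ?g2_anticomm_Tm.
Qed.

Lemma cliff_factor_anticomm p q l : (p < q)%N ->
  cliff_factor p l *m cliff_factor q l = if l == q./2
    then - (cliff_factor q l *m cliff_factor p l)
    else cliff_factor q l *m cliff_factor p l.
Proof.
move=> lt_pq; have le_half : (p./2 <= q./2)%N by apply/half_leq/ltnW.
rewrite /cliff_factor; case: (ltngtP l q./2) => [_|gt_lq|->].
- by rewrite /Em mul1mx mulmx1.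
- by rewrite !ifF //; lia.
rewrite ltnNge le_half /=; case: ltngtP le_half => // [lt_half|eq_half] _.
  by case: odd; rewrite ?g1_anticomm_Tm ?g2_anticomm_Tm opprK.
have [/negbTE -> ->] := odd_of_half_eq lt_pq eq_half.
by rewrite g1_anticomm_g2.
Qed.

Lemma trmxC_cliff n (p : 'I_n) : (cliff R p)^t* = - cliff R p.
Proof.
have [p_last|p_other] := eqVneq (p : nat) (n./2).*2.
  rewrite cliff_last // trmxC_scale trmxC_kron (eq_kron (G := fun _ => Tm R)).
    by rewrite -scaleNr; congr (_ *: _); simpc.
  by move=> *; apply: trmxC_Tm.
rewrite cliffE // trmxC_kron; apply: (kron_oppr_at (half_lt_half_dim p_other)).
by move=> l _; apply: trmxC_cliff_factor.
Qed.

Lemma cliff_sqr n (p : 'I_n) : cliff R p *m cliff R p = - 1%:M.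
Proof.
have [p_last|p_other] := eqVneq (p : nat) (n./2).*2.
  rewrite cliff_last // -scalemxAl -scalemxAr scalerA mulmx_kron.
  rewrite (eq_kron (G := fun _ => 1%:M)) => [|l _]; last exact: Tm_sqr.
  by rewrite kron1 -scaleN1r; congr (_ *: _); simpc.
rewrite cliffE // mulmx_kron -(kron1 R n./2).
apply: (kron_oppr_at (half_lt_half_dim p_other)) => l _.
exact: cliff_factor_sqr.
Qed.

Lemma cliff_anticomm_lt n (p q : 'I_n) : (p < q)%N ->
  cliff R p *m cliff R q = - (cliff R q *m cliff R p).
Proof.
move=> lt_pq; have p_other : (p : nat) != (n./2).*2.
  apply/eqP => p_last; have := ltn_ord q; have := odd_double_half n.
  by case: odd => /=; lia.
rewrite (cliffE p_other); have [q_last|q_other] := eqVneq (q : nat) (n./2).*2.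
  rewrite cliff_last // -scalemxAl -scalemxAr -scalerN; congr (_ *: _).
  rewrite !mulmx_kron; apply: (kron_oppr_at (half_lt_half_dim p_other)) => l _.
  exact: cliff_factor_anticomm_Tm.
rewrite cliffE // !mulmx_kron; apply: (kron_oppr_at (half_lt_half_dim q_other)).
by move=> l _; apply: cliff_factor_anticomm.
Qed.

Lemma cliff_anticomm n (p q : 'I_n) : p != q ->
  cliff R p *m cliff R q = - (cliff R q *m cliff R p).
Proof.
rewrite neq_ltn => /orP [lt_pq|lt_qp]; first exact: cliff_anticomm_lt.
by rewrite (cliff_anticomm_lt lt_qp) opprK.
Qed.

End CliffordMatrices.

Section HermitianProduct.
Variable R : rcfType.
Local Notation C := R[i].
Variable N : nat.
Implicit Types u v : 'cV[C]_N.

Lemma hermE u v : herm u v = (v^t* *m u) 0 0.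
Proof. by rewrite /herm !mxE; apply: eq_bigr => r _; rewrite !mxE mulrC. Qed.

Lemma herm_mulmxl (A : 'M[C]_N) u v : herm (A *m u) v = herm u (A^t* *m v).
Proof. by rewrite !hermE trmx_mul map_mxM trmxCK mulmxA. Qed.

Lemma hermZl c u v : herm (c *: u) v = c * herm u v.
Proof. by rewrite /herm mulr_sumr; apply: eq_bigr => r _; rewrite mxE mulrA. Qed.

Lemma hermZr c u v : herm u (c *: v) = conjc c * herm u v.
Proof.
by rewrite /herm mulr_sumr; apply: eq_bigr => r _; rewrite mxE rmorphM mulrCA.
Qed.

Lemma hermDl u u' v : herm (u + u') v = herm u v + herm u' v.
Proof. by rewrite /herm -big_split; apply: eq_bigr => r _; rewrite mxE mulrDl. Qed.

Lemma hermDr u v v' : herm u (v + v') = herm u v + herm u v'.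
Proof.
by rewrite /herm -big_split; apply: eq_bigr => r _; rewrite mxE rmorphD mulrDr.
Qed.

Lemma hermNl u v : herm (- u) v = - herm u v.
Proof. by rewrite -scaleN1r hermZl mulN1r. Qed.

Lemma hermNr u v : herm u (- v) = - herm u v.
Proof. by rewrite -scaleN1r hermZr rmorphN1 mulN1r. Qed.

Lemma herm_suml n (F : 'I_n -> 'cV[C]_N) v :
  herm (\sum_(p < n) F p) v = \sum_(p < n) herm (F p) v.
Proof.
elim/big_rec2: _ => [|p _ w _ <-]; last by rewrite hermDl.
by apply: big1 => r _; rewrite mxE mul0r.
Qed.

Lemma herm_sub_imag_skew (M : 'M[C]_N) (s : R) (z : C) a :
  M^t* = - M -> M *m M = - s%:C *: 1%:M -> conjc z = - z ->
  herm (a - z *: (M *m a)) (a - z *: (M *m a)) =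
    (1 - z * z * s%:C) * herm a a - 2%:R * z * herm (M *m a) a.
Proof.
move=> M_skew M_sqr z_imag.
have herm_a_Ma : herm a (M *m a) = - herm (M *m a) a.
  by rewrite -{1}(trmxCK M) -herm_mulmxl M_skew mulNmx hermNl.
have herm_Ma_Ma : herm (M *m a) (M *m a) = s%:C * herm a a.
  rewrite herm_mulmxl M_skew mulNmx mulmxA M_sqr -scalemxAl mul1mx.
  by rewrite scaleNr opprK hermZr conjc_real.
rewrite hermDl !hermDr !hermNl !hermNr !hermZl !hermZr.
rewrite herm_a_Ma herm_Ma_Ma z_imag; ring.
Qed.

End HermitianProduct.

Section CliffordCombinations.
Variable R : rcfType.
Local Notation C := R[i].
Variables (N n : nat) (E : 'I_n -> 'M[C]_N) (c : 'I_n -> R).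

Lemma trmxC_real_comb : (forall p, (E p)^t* = - E p) ->
  (\sum_p (c p)%:C *: E p)^t* = - \sum_p (c p)%:C *: E p.
Proof.
move=> E_skew; rewrite -sumrN.
elim/big_rec2: _ => [|p A B _ <-]; first by rewrite trmx0 map_mx0.
by rewrite linearD map_mxD trmxC_scale conjc_real E_skew scalerN.
Qed.

Lemma sqr_real_comb : (forall p, E p *m E p = - 1%:M) ->
  (forall p q, p != q -> E p *m E q = - (E q *m E p)) ->
  (\sum_p (c p)%:C *: E p) *m (\sum_p (c p)%:C *: E p) =
    - (\sum_p c p ^+ 2)%:C *: 1%:M.
Proof.
move=> E_sqr E_anticomm.
pose f p q := ((c p)%:C * (c q)%:C) *: (E p *m E q).
have -> : (\sum_p (c p)%:C *: E p) *m (\sum_p (c p)%:C *: E p) =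
    \sum_p \sum_q f p q.
  rewrite mulmx_suml; apply: eq_bigr => p _; rewrite mulmx_sumr.
  by apply: eq_bigr => q _; rewrite -scalemxAl -scalemxAr scalerA.
(* Doubling the double sum pairs f p q with f q p; they cancel unless p = q. *)
have f_pair p q : f p q + f q p = if q == p then f p p *+ 2 else 0.
  case: eqVneq => [->|neq_qp]; first by rewrite mulr2n.
  by rewrite /f E_anticomm 1?eq_sym // scalerN mulrC addNr.
apply: (scalerI (a := 2%:R)); first by rewrite pnatr_eq0.
rewrite !scaler_nat mulr2n [X in _ + X = _]exchange_big -big_split /=.
rewrite rmorph_sum -sumrN scaler_suml -sumrMnl; apply: eq_bigr => p _.
rewrite -big_split /=; under eq_bigr do rewrite f_pair.
rewrite -big_mkcond big_pred1_eq /f E_sqr -rmorphM -expr2.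
by rewrite scalerN -scaleNr.
Qed.

End CliffordCombinations.

Section BaumSpinors.
Variable R : rcfType.
Local Notation C := R[i].
Variable n : nat.
Implicit Types (x : 'rV[R]_n) (a : 'cV[C]_(2 ^ n./2)).

Lemma trmxC_cliffx x : (cliffx x)^t* = - cliffx x.
Proof. by apply: trmxC_real_comb => p; apply: trmxC_cliff. Qed.

Lemma cliffx_sqr x : cliffx x *m cliffx x = - (sqnorm x)%:C *: 1%:M.
Proof.
by apply: sqr_real_comb => [p|p q]; [apply: cliff_sqr | apply: cliff_anticomm].
Qed.

Lemma herm_cliffx x a :
  herm (cliffx x *m a) a = \sum_p (x 0 p)%:C * herm (cliff R p *m a) a.
Proof.
rewrite mulmx_suml herm_suml; apply: eq_bigr => p _.
by rewrite -scalemxAl hermZl.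
Qed.

Lemma lorentz_hyp_of_ball_zeta (k : R) x a :
  lorentz (hyp_of_ball k x) (zeta a) =
    (2 / (1 - k ^+ 2 * sqnorm x))%:C * 'i * herm (cliffx x *m a) a
    - ((1 + k ^+ 2 * sqnorm x) / (k * (1 - k ^+ 2 * sqnorm x)))%:C * herm a a.
Proof.
rewrite /lorentz /zeta /cliff0 /= mul_scalar_mx !hermZl mulrA.
have -> : 'i * 'i = -1 :> C by simpc.
rewrite mulN1r opprK herm_cliffx mulr_sumr; congr (_ - _).
apply: eq_bigr => p _; rewrite !mxE hermZl mulrAC rmorphM /=; ring.
Qed.

End BaumSpinors.

Theorem proposition2p3 (R : rcfType) (n : nat) (k : R)
  (a : 'cV[R[i]]_(2 ^ n./2)) (x : 'rV[R]_n) :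
  (2 <= n)%N -> 0 < k -> k ^+ 2 * sqnorm x < 1 ->
  herm (killing k a x) (killing k a x) =
    - (2 * k)%:C * lorentz (hyp_of_ball k x) (zeta a).
Proof.
move=> _ k_gt0 kx_lt1.
have d_gt0 : 0 < 1 - k ^+ 2 * sqnorm x by rewrite subr_gt0.
set d := 1 - k ^+ 2 * sqnorm x in d_gt0 *.
have ik_imag : conjc ('i * k%:C) = - ('i * k%:C) by simpc.
have ik_sqr : 'i * k%:C * ('i * k%:C) = - (k ^+ 2)%:C by simpc.
rewrite /killing hermZl hermZr conjc_real mulrA -rmorphM -expr2.
rewrite sqr_sqrtr ?divr_ge0 ?ltW //.
rewrite (herm_sub_imag_skew (s := sqnorm x)) ?trmxC_cliffx ?cliffx_sqr // ik_sqr.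
rewrite lorentz_hyp_of_ball_zeta -/d; clearbody d.
have d_neq0 : d%:C != 0 by rewrite eq_complex /= eqxx gt_eqF.
have k_neq0 : k%:C != 0 by rewrite eq_complex /= eqxx gt_eqF.
rewrite !(rmorphM, rmorphD, rmorphN, fmorphV, rmorphXn, rmorph1, rmorph_nat) /=.
field; exact/andP.
Qed.
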